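(* Let $\mathbf{k}$ be a field of characteristic $0$, $n\ge2$ and $\lambda$ a partition with $|\lambda|<n$ and $n-|\lambda|$ even. Then there is a finite set $F\subset\mathbb{Q}$ such that for every $m\in\mathbf{k}$ with $m\notin\mathcal{S}_n\cup F$, one has $\rho_\lambda(T)\neq0$, where $\rho_\lambda$ is the irreducible representation of $Br_n(m)$ indexed by $\lambda$ and $T=\sum_{1\le i<j\le n}t_{ij}$.
   Context: $Br_n(m)$ is the Brauer algebra over $\mathbf{k}$ with basis the Brauer diagrams on $n$ top and $n$ bottom points, product by stacking (second factor below) with closed loops replaced by $m$; $s_{ij}$ is the transposition diagram, $p_{ij}$ the diagram joining top $i$ to top $j$ and bottom $i$ to bottom $j$ with other strands vertical, $t_{ij}=s_{ij}-p_{ij}$. For a partition $\mu$ with $|\mu|\le n$, $n-|\mu|$ even, $P_\mu\in\mathbb{Q}[m]$ is the polynomial equal, at every sufficiently large integer $m$, to the dimension of the irreducible $O(m)$-module indexed by $\mu$; $\mathcal{S}_n=\{m\mid\exists\mu,\ |\mu|\le n,\ P_\mu(m)=0\}\subset\mathbb{Z}$. For $m\notin\mathcal{S}_n$, $Br_n(m)$ is split semisimple and its irreducible representations are indexed (Wenzl's parametrization) by the partitions $\mu$ with $|\mu|\le n$, $n-|\mu|$ even; those with $|\mu|=n$ are exactly those factoring through $\mathbf{k}\mathfrak{S}_n=Br_n(m)/(p_{12})$. *)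

From HB Require Import structures.
From mathcomp Require Import all_boot all_order all_algebra all_fingroup.
Set Implicit Arguments. Unset Strict Implicit. Unset Printing Implicit Defensive.
Import GRing.Theory.
Local Open Scope ring_scope.

(* Points: inl i = top point i, inr i = bottom point i.               *)
(* A diagram is a fixed-point-free involution of the 2n points.       *)
Definition pt (n : nat) := ('I_n + 'I_n)%type.

Definition is_diag n (f : {ffun pt n -> pt n}) : bool :=
  [forall x, (f (f x) == x) && (f x != x)].

Definition diagram n := {f : {ffun pt n -> pt n} | is_diag f}.

Definition isbot n (x : pt n) : bool := if x is inr _ then true else false.
Definition istop n (x : pt n) : bool := if x is inl _ then true else false.

Definition id_fun n : {ffun pt n -> pt n} :=
  [ffun x => match x with inl i => inr i | inr i => inl i end].

Lemma id_diag_ok n : is_diag (id_fun n).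
Proof. by apply/forallP => -[i|i]; rewrite !ffunE /= eqxx. Qed.

Definition id_diag n : diagram n := exist _ (id_fun n) (id_diag_ok n).

(* Build a diagram from a function which is (in all our uses) a
   fixed-point-free involution; the default is never used. *)
Definition mkdiag n (f : pt n -> pt n) : diagram n :=
  odflt (id_diag n) (insub [ffun x => f x]).

(* Following a strand through the middle row (bottom of d1 = top of d2).
   side = true : we arrived at middle point j through d1, continue in d2;
   side = false: we arrived at middle point j through d2, continue in d1. *)
Fixpoint follow n (d1 d2 : diagram n) (fuel : nat) (side : bool) (j : 'I_n)
  : pt n :=
  match fuel with
  | 0 => inl j
  | f.+1 =>
    if side then
      match val d2 (inl j) with inr b => inr b | inl j' => follow d1 d2 f false j' end
    else
      match val d1 (inr j) with inl a => inl a | inr j' => follow d1 d2 f true j' end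
  end.

Definition comp_fun n (d1 d2 : diagram n) (x : pt n) : pt n :=
  match x with
  | inl a => match val d1 (inl a) with
             | inl a' => inl a'
             | inr j => follow d1 d2 n.+1 true j end
  | inr b => match val d2 (inr b) with
             | inr b' => inr b'
             | inl j => follow d1 d2 n.+1 false j end
  end.

Definition diag_mul n (d1 d2 : diagram n) : diagram n := mkdiag (comp_fun d1 d2).

(* closed loops created in the middle row *)
Definition mid_edge n (d1 d2 : diagram n) : rel 'I_n :=
  fun j j' => (val d1 (inr j) == inr j') || (val d2 (inl j) == inl j').

Definition inner n (d1 d2 : diagram n) (j : 'I_n) : bool :=
  isbot (val d1 (inr j)) && istop (val d2 (inl j)).

Definition nloops n (d1 d2 : diagram n) : nat :=
  n_comp (mid_edge d1 d2)
    [pred j | [forall j', connect (mid_edge d1 d2) j j' ==> inner d1 d2 j']].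

(* elements: K-linear combinations of diagrams *)
Notation Br K n := {ffun diagram n -> K}.

Definition bd (K : fieldType) n (d : diagram n) : Br K n :=
  [ffun d' => (d' == d)%:R].

Definition bmul (K : fieldType) n (m : K) (a b : Br K n) : Br K n :=
  [ffun d => \sum_(d1 : diagram n) \sum_(d2 : diagram n)
     (if diag_mul d1 d2 == d then a d1 * b d2 * m ^+ nloops d1 d2 else 0)].

Definition swap n (i j a : 'I_n) : 'I_n := if a == i then j else if a == j then i else a.

Definition s_diag n (i j : 'I_n) : diagram n :=
  mkdiag (fun x : pt n => match x with
                          | inl a => inr (swap i j a)
                          | inr b => inl (swap i j b) end).

Definition p_diag n (i j : 'I_n) : diagram n :=
  mkdiag (fun x : pt n => match x with
                          | inl a => if (a == i) || (a == j) then inl (swap i j a) else inr a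
                          | inr b => if (b == i) || (b == j) then inr (swap i j b) else inl b
                          end).

Definition t_elt (K : fieldType) n (i j : 'I_n) : Br K n :=
  bd K (s_diag i j) - bd K (p_diag i j).

Definition Tsum (K : fieldType) n : Br K n :=
  \sum_(i : 'I_n) \sum_(j : 'I_n | (i < j)%N) t_elt K i j.

Definition is_partition (l : seq nat) : bool :=
  sorted geq l && all (fun x => 0 < x)%N l.

(* conjugate partition, 0-indexed: conj_part l j = #{ rows of length > j } *)
Definition conj_part (l : seq nat) (j : nat) : nat := count (fun x => j < x)%N l.

(* For the cell (i,j) (0-indexed, j < l_i): *)
Definition hook (l : seq nat) (i j : nat) : nat :=
  (nth 0 l i - j + conj_part l j - i - 1)%N.

(* El Samra--King content: with 1-indexed I = i+1, J = j+1,
   r = l_I + l_J - I - J            if I <= J,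
   r = - l'_I - l'_J + I + J - 2    if I > J. *)
Definition okcontent (l : seq nat) (i j : nat) : int :=
  if (i <= j)%N then (nth 0 l i + nth 0 l j)%:Z - (i + j + 2)%:Z
  else (i + j)%:Z - (conj_part l i + conj_part l j)%:Z.

(* P_mu(N) = prod over cells (N + r)/h : dimension of the irreducible
   O(N)-module [mu] for N large (El Samra--King). *)
Definition Pdim (l : seq nat) : {poly rat} :=
  \prod_(i < size l) \prod_(j < nth 0 l i)
     (('X + (okcontent l i j)%:~R%:P) * ((hook l i j)%:R^-1)%:P).

Definition in_Sn (n : nat) (z : int) : Prop :=
  exists mu : seq nat, [/\ is_partition mu, (sumn mu <= n)%N,
                          ~~ odd (n - sumn mu) & (Pdim mu).[z%:~R] = 0].

(* diagram with top arcs {0,1},...,{2k-2,2k-1} and the same bottom arcs,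
   vertical strands elsewhere; here k2 = 2k *)
Definition partner n (a : 'I_n) : 'I_n :=
  odflt a (insub (if odd a then a.-1 else a.+1)).

Definition arc_diag n (k2 : nat) : diagram n :=
  mkdiag (fun x : pt n => match x with
                          | inl a => if (a < k2)%N then inl (partner a) else inr a
                          | inr b => if (b < k2)%N then inr (partner b) else inl b
                          end).

Definition perm_diag n (s : 'S_n) : diagram n :=
  mkdiag (fun x : pt n => match x with
                          | inl i => inr (s i)
                          | inr j => inl ((s^-1)%g j) end).

(* canonical Young tableau of shape l filled row by row with off, off+1, ... *)
Definition trows (l : seq nat) (off : nat) : seq (seq nat) :=
  [seq iota (off + sumn (take i l)) (nth 0 l i) | i <- iota 0 (size l)].
Definition rowid (l : seq nat) (off p : nat) : nat := find (fun row => p \in row) (trows l off).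
Definition colid (l : seq nat) (off p : nat) : nat :=
  index p (nth [::] (trows l off) (rowid l off p)).

(* row / column stabilisers of that tableau inside S_n (fixing points < off) *)
Definition rowstab n (l : seq nat) : {set 'S_n} :=
  [set s : 'S_n | [forall p : 'I_n, if (p < n - sumn l)%N then s p == p
                     else rowid l (n - sumn l) (s p) == rowid l (n - sumn l) p]].
Definition colstab n (l : seq nat) : {set 'S_n} :=
  [set s : 'S_n | [forall p : 'I_n, if (p < n - sumn l)%N then s p == p
                     else colid l (n - sumn l) (s p) == colid l (n - sumn l) p]].

(* Young symmetriser y_lambda on the strands n-|l|, ..., n-1 *)
Definition ysym (K : fieldType) n (m : K) (l : seq nat) : Br K n :=
  bmul m (\sum_(s in rowstab n l) bd K (perm_diag s))
         (\sum_(s in colstab n l) [ffun d => (-1) ^+ odd_perm s * bd K (perm_diag s) d]).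

Definition cellgen (K : fieldType) n (m : K) (l : seq nat) : Br K n :=
  bmul m (bd K (arc_diag n (n - sumn l))) (@ysym K n m l).

Definition nprop n (d : diagram n) : nat := #|[set i : 'I_n | isbot (val d (inl i))]|.

(* membership in J = span of diagrams with fewer than r propagating strands *)
Definition inJ (K : fieldType) n (r : nat) (a : Br K n) : Prop :=
  forall d : diagram n, (r <= nprop d)%N -> a d = 0.

(* rho_lambda(z) <> 0, where rho_lambda is the action of Br_n(m) on the
   cell module W(lambda) = (Br_n(m) * cellgen + J)/J *)
Definition rho_nonzero (K : fieldType) n (m : K) (l : seq nat) (z : Br K n) : Prop :=
  exists a : Br K n, ~ inJ (sumn l) (bmul m z (bmul m a (@cellgen K n m l))).

From HB Require Import structures.
From mathcomp Require Import all_boot all_order all_algebra all_fingroup.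
Set Implicit Arguments. Unset Strict Implicit. Unset Printing Implicit Defensive.
Import GRing.Theory.
Local Open Scope ring_scope.

(* Let k = n - |lam| and let A be the diagram with top and bottom arcs
   {0,1}, ..., {k-2,k-1} and vertical strands elsewhere; it has |lam|
   propagating strands, so it survives in the cell module, whose generator is
   v = sum_(r in R, c in C) sgn(c) A.(r c) for the row and column stabilisers
   R, C of a tableau on the last |lam| strands.  We compute the coefficient of
   A in T v.  The terms s_ij A (r c) close no loop and contribute an integer a.
   The term p_ij A (r c) equals A only if {i,j} is an arc of A and r c = 1,
   and then closes exactly one loop; since R and C meet trivially, r c = 1
   forces r = c = 1.  Hence the coefficient is a - (k/2) m, which is nonzero
   unless m = a / (k/2): one may take F = {a / (k/2)}. *)

Section Diagrams.
Variable n : nat.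
Implicit Types (d : diagram n) (f g : pt n -> pt n).

Lemma diagK d : involutive (val d).
Proof. by move=> x; have /forallP/(_ x)/andP[/eqP] := valP d. Qed.

Lemma mkdiagE f : is_diag [ffun x => f x] -> val (mkdiag f) =1 f.
Proof. by move=> fP x; rewrite /mkdiag insubT /= ffunE. Qed.

Lemma mkdiag_eq f d : f =1 val d -> mkdiag f = d.
Proof.
move=> fd; have Ef : [ffun x => f x] = val d by apply/ffunP => x; rewrite ffunE.
have fP : is_diag [ffun x => f x] by rewrite Ef; apply: valP.
by apply: val_inj; apply/ffunP => x; rewrite mkdiagE.
Qed.

Lemma eq_mkdiag f g : f =1 g -> mkdiag f = mkdiag g.
Proof.
by move=> fg; rewrite /mkdiag; congr (odflt _ (insub _)); apply/ffunP => x; rewrite !ffunE.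
Qed.

Lemma mkdiag_or_id f x : val (mkdiag f) x = f x \/ mkdiag f = id_diag n.
Proof. by rewrite /mkdiag; case: insubP => [u _ fu|_]; [left; rewrite fu ffunE | right]. Qed.

Lemma mid_edge_sym d1 d2 : symmetric (mid_edge d1 d2).
Proof.
move=> x y; apply/idP/idP => /orP[/eqP E|/eqP E]; apply/orP;
  [left|right|left|right]; by rewrite -E diagK.
Qed.

Lemma nloops_eq0 d1 d2 : (forall j, ~~ inner d1 d2 j) -> nloops d1 d2 = 0%N.
Proof.
move=> no_inner; apply: eq_card0 => j; rewrite !inE.
by apply/andP => -[_ /forallP/(_ j)]; rewrite connect0 /= (negbTE (no_inner j)).
Qed.

Lemma nloops_eq1 d1 d2 (i j : 'I_n) :
  inner d1 d2 =1 pred2 i j -> mid_edge d1 d2 i j ->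
  (forall x y, mid_edge d1 d2 x y -> pred2 i j y -> pred2 i j x) ->
  nloops d1 d2 = 1%N.
Proof.
move=> innerE eij ij_closed; rewrite /nloops.
have sym := sym_connect_sym (mid_edge_sym d1 d2).
have cl : closed (mid_edge d1 d2) (pred2 i j).
  by apply: intro_closed => // x y exy; apply: ij_closed; rewrite mid_edge_sym.
rewrite -(n_comp_connect sym i); apply: eq_n_comp_r => x; rewrite !inE.
apply/forallP/idP => [/(_ x)|cix y].
  by rewrite connect0 /= innerE => /pred2P[->|->]; [apply: connect0 | apply: connect1].
apply/implyP => cxy; rewrite innerE.
by have := closed_connect cl cxy; have := closed_connect cl cix; rewrite !inE eqxx => <- <-.
Qed.

(* A middle-row point witnesses n > 0, so [follow] can take one more step. *)
Lemma follow_predS d1 d2 side (j : 'I_n) :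
  follow d1 d2 n side j = follow d1 d2 n.-1.+1 side j.
Proof. by rewrite prednK // (leq_ltn_trans _ (ltn_ord j)). Qed.

(* Stacking with a diagram all of whose strands propagate reduces to relabelling. *)
Lemma comp_fun_propl d1 d2 (f g : 'I_n -> 'I_n) :
  (forall a, val d1 (inl a) = inr (f a)) -> (forall b, val d1 (inr b) = inl (g b)) ->
  comp_fun d1 d2 =1 fun x => match x with
   | inl a => if val d2 (inl (f a)) is inl j then inl (g j) else val d2 (inl (f a))
   | inr b => if val d2 (inr b) is inl j then inl (g j) else val d2 (inr b) end.
Proof.
move=> d1l d1r [a|b]; rewrite /comp_fun ?d1l /=;
  by case: (val d2 _) => //= j; rewrite ?(follow_predS d1 d2) /= d1r.
Qed.

Lemma comp_fun_propr d1 d2 (f g : 'I_n -> 'I_n) :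
  (forall a, val d2 (inl a) = inr (f a)) -> (forall b, val d2 (inr b) = inl (g b)) ->
  comp_fun d1 d2 =1 fun x => match x with
   | inl a => if val d1 (inl a) is inr j then inr (f j) else val d1 (inl a)
   | inr b => if val d1 (inr (g b)) is inr j then inr (f j) else val d1 (inr (g b)) end.
Proof.
move=> d2l d2r [a|b]; rewrite /comp_fun ?d2r /=;
  by case: (val d1 _) => //= j; rewrite ?(follow_predS d1 d2) /= d2l.
Qed.

Lemma nloops_propl d1 d2 (g : 'I_n -> 'I_n) :
  (forall b, val d1 (inr b) = inl (g b)) -> nloops d1 d2 = 0%N.
Proof. by move=> d1r; apply: nloops_eq0 => j; rewrite /inner d1r. Qed.

Lemma nloops_propr d1 d2 (f : 'I_n -> 'I_n) :
  (forall a, val d2 (inl a) = inr (f a)) -> nloops d1 d2 = 0%N.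
Proof. by move=> d2l; apply: nloops_eq0 => j; rewrite /inner d2l andbF. Qed.

End Diagrams.

Section SimpleDiagrams.
Variable n : nat.
Implicit Types (i j a : 'I_n) (d : diagram n).

Lemma swapK i j : involutive (swap i j).
Proof.
move=> a; rewrite /swap; case: (eqVneq a i) => [->|ai]; first by rewrite eqxx; case: eqVneq.
by case: (eqVneq a j) => [->|aj]; rewrite ?eqxx // (negbTE ai) (negbTE aj).
Qed.

Lemma swap_pred2 i j a :
  (swap i j a == i) || (swap i j a == j) = (a == i) || (a == j).
Proof.
rewrite /swap; case: (eqVneq a i) => [->|ai]; first by rewrite eqxx orbT.
by case: (eqVneq a j) => [_|aj]; rewrite ?eqxx // (negbTE ai) (negbTE aj).
Qed.

Lemma swap_neq i j a : i != j -> (a == i) || (a == j) -> swap i j a != a.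
Proof.
move=> ij; rewrite /swap; case: (eqVneq a i) => [->|ai] /=; first by rewrite eq_sym.
by move=> /eqP->; rewrite eqxx.
Qed.

Lemma s_diagE i j : val (s_diag i j) =1 fun x =>
  match x with inl a => inr (swap i j a) | inr b => inl (swap i j b) end.
Proof. by apply: mkdiagE; apply/forallP => -[a|a]; rewrite !ffunE /= swapK eqxx. Qed.

Lemma p_diagE i j : i != j -> val (p_diag i j) =1 fun x =>
  match x with
  | inl a => if (a == i) || (a == j) then inl (swap i j a) else inr a
  | inr b => if (b == i) || (b == j) then inr (swap i j b) else inl b end.
Proof.
move=> ij; apply: mkdiagE; apply/forallP => -[a|a]; rewrite !ffunE /=;
  case: ifP => a_ij; rewrite /= ?swap_pred2 ?a_ij ?swapK ?eqxx //=;
  exact: swap_neq.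
Qed.

Lemma perm_diagE (s : 'S_n) : val (perm_diag s) =1 fun x =>
  match x with inl i => inr (s i) | inr j => inl ((s^-1)%g j) end.
Proof. by apply: mkdiagE; apply/forallP => -[a|a]; rewrite !ffunE /= ?permK ?permKV eqxx. Qed.

Lemma perm_diag_mul (r c : 'S_n) :
  diag_mul (perm_diag r) (perm_diag c) = perm_diag (r * c)%g.
Proof.
apply: mkdiag_eq => x; rewrite (@comp_fun_propr _ _ _ c (c^-1)%g) => [|a|a];
  rewrite ?perm_diagE //.
by case: x => [a|b]; rewrite /= !perm_diagE /= ?permM // invMg permM.
Qed.

Lemma nloops_perm_diag (r c : 'S_n) : nloops (perm_diag r) (perm_diag c) = 0%N.
Proof. by apply: (@nloops_propl _ _ _ (r^-1)%g) => b; rewrite perm_diagE. Qed.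

Lemma nloops_s_diag i j d : nloops (s_diag i j) d = 0%N.
Proof. by apply: (@nloops_propl _ _ _ (swap i j)) => b; rewrite s_diagE. Qed.

Lemma id_diag_mul d : diag_mul (id_diag n) d = d.
Proof.
apply: mkdiag_eq => x; rewrite (@comp_fun_propl _ _ _ id id) => [|a|a];
  rewrite /= ?ffunE //.
by case: x => [a|b]; case: (val d _).
Qed.

Lemma nloops_id_diag d : nloops (id_diag n) d = 0%N.
Proof. by apply: (@nloops_propl _ _ _ id) => b; rewrite /= ffunE. Qed.

End SimpleDiagrams.

Definition partner_nat (a : nat) := if odd a then a.-1 else a.+1.

Lemma partner_natK : involutive partner_nat.
Proof.
move=> a; rewrite {2}/partner_nat; case: ifP => a_odd; last by rewrite /partner_nat /= a_odd.
by case: a a_odd => //= a; rewrite /partner_nat => /negbTE ->.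
Qed.

Definition ords_ge n k : {set 'I_n} := [set p : 'I_n | (k <= p)%N].

Section ArcDiagram.
Variables (n k : nat).
Hypotheses (k_even : ~~ odd k) (k_le_n : (k <= n)%N).
Implicit Types (a b : 'I_n) (s : 'S_n).

Lemma partner_nat_lt (a : nat) : (a < k)%N -> (partner_nat a < k)%N.
Proof.
rewrite /partner_nat; case: ifP => a_odd a_lt; first by case: a a_lt a_odd => //= a /ltnW.
by rewrite ltn_neqAle a_lt andbT; apply: contraNneq k_even => <-; rewrite /= a_odd.
Qed.

Lemma partnerE a : (a < k)%N -> partner a = partner_nat a :> nat.
Proof. by move=> a_lt; rewrite /partner insubT // (leq_trans (partner_nat_lt a_lt)). Qed.

Lemma partner_lt a : (a < k)%N -> (partner a < k)%N.
Proof. by move=> a_lt; rewrite partnerE // partner_nat_lt. Qed.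

Lemma partnerK a : (a < k)%N -> partner (partner a) = a.
Proof.
by move=> a_lt; apply: val_inj; rewrite /= (partnerE (partner_lt a_lt)) partnerE // partner_natK.
Qed.

Lemma partner_neq a : (a < k)%N -> partner a != a.
Proof.
move=> a_lt; rewrite -(inj_eq val_inj) /= partnerE // /partner_nat.
by case: ifP => a_odd; [case: (a : nat) a_odd => //= a' _; rewrite ltn_eqF | rewrite gtn_eqF].
Qed.

Lemma partner_inj a b : (a < k)%N -> (b < k)%N -> partner a = partner b -> a = b.
Proof. by move=> a_lt b_lt ab; rewrite -(partnerK a_lt) ab partnerK. Qed.

Lemma perm_on_ge s a : perm_on (ords_ge n k) s -> (k <= s a)%N = (k <= a)%N.
Proof. by move=> s_on; have := perm_closed a s_on; rewrite !inE. Qed.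

Lemma perm_on_lt s a : perm_on (ords_ge n k) s -> (a < k)%N -> s a = a.
Proof. by move=> s_on a_lt; apply: out_perm s_on _; rewrite inE -ltnNge. Qed.

Definition arc_perm s : diagram n := diag_mul (arc_diag n k) (perm_diag s).

(* The explicit form of [arc_perm s] when [s] fixes the points below [k]. *)
Definition arc_perm_fun s (x : pt n) : pt n :=
  match x with
  | inl a => if (a < k)%N then inl (partner a) else inr (s a)
  | inr b => if (b < k)%N then inr (partner b) else inl ((s^-1)%g b) end.

Lemma arc_perm_fun_diag s :
  perm_on (ords_ge n k) s -> is_diag [ffun x => arc_perm_fun s x].
Proof.
move=> s_on; have sV_on := perm_onV s_on.
apply/forallP => -[a|a]; rewrite !ffunE /=; case: ifP => a_lt /=;
  rewrite ?(partner_lt a_lt) ?(partnerK a_lt) ?eqxx ?(partner_neq a_lt) //=;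
  by rewrite ltnNge ?(perm_on_ge _ s_on) ?(perm_on_ge _ sV_on) -ltnNge a_lt
            ?permK ?permKV eqxx.
Qed.

Lemma arc_diagE : val (arc_diag n k) =1 arc_perm_fun 1.
Proof.
have -> : arc_diag n k = mkdiag (arc_perm_fun 1).
  by apply: eq_mkdiag => -[a|b]; rewrite /= ?invg1 perm1.
by apply: mkdiagE; apply: arc_perm_fun_diag; apply: perm_on1.
Qed.

Lemma arc_permE s : perm_on (ords_ge n k) s -> val (arc_perm s) =1 arc_perm_fun s.
Proof.
move=> s_on; have sV_on := perm_onV s_on.
have -> : arc_perm s = mkdiag (arc_perm_fun s).
  apply: eq_mkdiag => x; rewrite (@comp_fun_propr _ _ _ s (s^-1)%g) => [|a|a];
    rewrite ?perm_diagE //.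
  case: x => [a|b]; rewrite arc_diagE /=; first by case: (a < k)%N; rewrite ?perm1.
  rewrite ltnNge (perm_on_ge _ sV_on) -ltnNge; case: ifP => b_lt /=; last by rewrite invg1 perm1.
  by rewrite (perm_on_lt sV_on b_lt) (perm_on_lt s_on (partner_lt b_lt)).
by apply: mkdiagE; apply: arc_perm_fun_diag.
Qed.

Lemma nloops_arc_perm s : nloops (arc_diag n k) (perm_diag s) = 0%N.
Proof. by apply: (@nloops_propr _ _ _ s) => a; rewrite perm_diagE. Qed.

Lemma arc_perm_eq_arc s :
  perm_on (ords_ge n k) s -> (arc_perm s == arc_diag n k) = (s == 1%g).
Proof.
move=> s_on; apply/eqP/eqP => [arc_s|->]; last first.
  by apply: val_inj; apply/ffunP => x; rewrite arc_permE ?perm_on1 // arc_diagE.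
apply/permP => a; rewrite perm1; case: (ltnP a k) => a_k; first exact: perm_on_lt.
have := arc_permE s_on (inl a); rewrite arc_s arc_diagE /= ltnNge a_k /= perm1.
by case.
Qed.

End ArcDiagram.

Definition is_arc n k (i j : 'I_n) : bool := (i < k)%N && (partner i == j).

Section ContractionOnArcs.
Variables (n k : nat).
Hypotheses (k_even : ~~ odd k) (k_le_n : (k <= n)%N).
Implicit Types (a : 'I_n) (s : 'S_n).
Local Notation partner_lt := (partner_lt k_even k_le_n).
Local Notation partnerK := (partnerK k_even k_le_n).
Local Notation partner_neq := (partner_neq k_even k_le_n).
Local Notation partner_inj := (partner_inj k_even k_le_n).
Local Notation arc_permE := (arc_permE k_even k_le_n).
Local Notation arc_diagE := (arc_diagE k_even k_le_n).
Local Notation arc_perm_eq_arc := (arc_perm_eq_arc k_even k_le_n).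

Section OneArc.
Variables (i j : 'I_n) (s : 'S_n).
Hypotheses (i_lt : (i < k)%N) (ij : partner i = j) (s_on : perm_on (ords_ge n k) s).

Let j_lt : (j < k)%N. Proof. by rewrite -ij partner_lt. Qed.
Let i_neq_j : i != j. Proof. by rewrite -ij eq_sym partner_neq. Qed.
Let ji : partner j = i. Proof. by rewrite -ij partnerK. Qed.

Let arc_lt a : (a == i) || (a == j) -> (a < k)%N.
Proof. by case/orP=> /eqP->. Qed.

Let partner_arc a : (a < k)%N ->
  ((partner a == i) || (partner a == j)) = ((a == i) || (a == j)).
Proof.
move=> a_lt; apply/idP/idP; last by case/orP => /eqP ->; rewrite ?ij ?ji eqxx ?orbT.
case/orP => /eqP pa.
- by rewrite (partner_inj a_lt j_lt) ?eqxx ?orbT // pa ji.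
- by rewrite (partner_inj a_lt i_lt) ?eqxx // pa ij.
Qed.

Let swap_arc a : (a == i) || (a == j) -> swap i j a = partner a.
Proof. by case/orP => /eqP->; rewrite /swap eqxx ?ij // eq_sym (negbTE i_neq_j) ji. Qed.

Lemma p_diag_arc_perm : diag_mul (p_diag i j) (arc_perm k s) = arc_perm k s.
Proof.
have sV_on := perm_onV s_on.
apply: mkdiag_eq => -[a|b]; rewrite /comp_fun ?(p_diagE i_neq_j) arc_permE //=.
- case: ifP => a_ij /=; first by rewrite (arc_lt a_ij) swap_arc.
  rewrite arc_permE //=; case: ifP => a_lt //=.
  by rewrite (follow_predS (p_diag i j)) /= (p_diagE i_neq_j) /= partner_arc // a_ij.
- case: ifP => b_lt //=; rewrite -[sval (p_diag i j)]/(val (p_diag i j)) (p_diagE i_neq_j) /=.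
  by case: ifP => // /arc_lt; rewrite ltnNge (perm_on_ge _ sV_on) -ltnNge b_lt.
Qed.

Lemma nloops_p_diag_arc_perm : nloops (p_diag i j) (arc_perm k s) = 1%N.
Proof.
apply: (nloops_eq1 (i := i) (j := j)).
- move=> x; rewrite /inner (p_diagE i_neq_j) arc_permE //=.
  by case: ifP => x_ij //=; rewrite (arc_lt x_ij).
- by rewrite /mid_edge (p_diagE i_neq_j) /= eqxx /= /swap !eqxx.
- move=> x y; rewrite /mid_edge (p_diagE i_neq_j) arc_permE //= => exy y_ij.
  apply: contraTT y_ij => /negbTE x_ij; move: exy; rewrite x_ij /=.
  by case: ifP => //= x_lt /eqP[<-]; rewrite partner_arc // x_ij.
Qed.

End OneArc.

Lemma p_diag_mul_neq_arc (i j : 'I_n) d : (0 < k)%N -> (i < j)%N -> ~~ is_arc k i j ->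
  diag_mul (p_diag i j) d != arc_diag n k.
Proof.
move=> k_gt0 i_lt_j not_arc; have i_neq_j : i != j by rewrite neq_ltn i_lt_j.
apply/eqP => pd_arc.
case: (mkdiag_or_id (comp_fun (p_diag i j) d) (inl i)) => [|pd_id].
  rewrite -/(diag_mul _ _) pd_arc arc_diagE /comp_fun (p_diagE i_neq_j) /= eqxx /=.
  rewrite /swap eqxx; case: ifP => i_lt //= [ij].
  by move: not_arc; rewrite /is_arc i_lt ij eqxx.
pose o := Ordinal (leq_trans k_gt0 k_le_n).
by have := arc_diagE (inl o); rewrite -pd_arc /diag_mul pd_id /= ffunE /= k_gt0.
Qed.

Lemma p_diag_arc_perm_coef (K : fieldType) (m : K) (i j : 'I_n) s :
  perm_on (ords_ge n k) s -> (0 < k)%N -> (i < j)%N ->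
  (diag_mul (p_diag i j) (arc_perm k s) == arc_diag n k)%:R *
     m ^+ nloops (p_diag i j) (arc_perm k s)
  = (is_arc k i j && (s == 1%g))%:R * m.
Proof.
move=> s_on k_gt0 i_lt_j; have [/andP[i_lt /eqP ij]|not_arc] := boolP (is_arc k i j).
  by rewrite p_diag_arc_perm // nloops_p_diag_arc_perm // arc_perm_eq_arc // expr1.
by rewrite (negbTE (p_diag_mul_neq_arc _ k_gt0 i_lt_j not_arc)) !mul0r.
Qed.

End ContractionOnArcs.

Local Close Scope ring_scope.

Lemma trows_cons x l off : trows (x :: l) off = iota off x :: trows l (off + x).
Proof.
rewrite /trows /= addn0; congr (_ :: _).
by rewrite -(addn0 1) iotaDl -map_comp; apply: eq_map => i /=; rewrite addnA.
Qed.

Lemma flatten_trows l off : flatten (trows l off) = iota off (sumn l).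
Proof. by elim: l off => [//|x l IHl] off; rewrite trows_cons /= IHl -iotaD. Qed.

Lemma rowid_colid_inj l off p q : off <= p < off + sumn l -> off <= q < off + sumn l ->
  rowid l off p = rowid l off q -> colid l off p = colid l off q -> p = q.
Proof.
have cellE r : off <= r < off + sumn l ->
    nth 0 (nth [::] (trows l off) (rowid l off r)) (colid l off r) = r.
  move=> r_in; have : r \in flatten (trows l off) by rewrite flatten_trows mem_iota.
  case/flattenP => row row_in r_row.
  have /(nth_find [::]) r_found : has (fun row => r \in row) (trows l off).
    by apply/hasP; exists row.
  by rewrite /colid nth_index.
by move=> p_in q_in rpq cpq; rewrite -(cellE p p_in) -(cellE q q_in) rpq cpq.
Qed.

(* [rowstab n l] and [colstab n l] are, by definition, the instances
   [f = rowid l off] and [f = colid l off] with [off = n - sumn l]. *)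
Definition fibre_stab n off (f : nat -> nat) : {set 'S_n} :=
  [set s : 'S_n | [forall p : 'I_n, if p < off then s p == p else f (s p) == f p]].

Section FibreStabiliser.
Variables (n off : nat) (f : nat -> nat).
Implicit Types (s : 'S_n) (p : 'I_n).

Lemma fibre_stab_perm_on s : s \in fibre_stab n off f -> perm_on (ords_ge n off) s.
Proof.
rewrite inE => /forallP s_stab; apply/subsetP => p; rewrite !inE.
by apply: contraR; rewrite -ltnNge => p_lt; have := s_stab p; rewrite p_lt.
Qed.

Lemma fibre_stabE s p : s \in fibre_stab n off f -> off <= p -> f (s p) = f p.
Proof. by rewrite inE => /forallP/(_ p) + p_ge; rewrite ltnNge p_ge => /eqP. Qed.

Lemma fibre_stab1 : 1%g \in fibre_stab n off f.
Proof. by rewrite inE; apply/forallP => p; rewrite perm1 eqxx; case: ifP. Qed.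

Lemma fibre_stabV s : s \in fibre_stab n off f -> (s^-1)%g \in fibre_stab n off f.
Proof.
move=> s_stab; have sV_on := perm_onV (fibre_stab_perm_on s_stab).
rewrite inE; apply/forallP => p; case: ifP => p_lt.
  by rewrite (perm_on_lt sV_on p_lt).
have sVp_ge : off <= (s^-1)%g p by rewrite (perm_on_ge _ sV_on) leqNgt p_lt.
by rewrite -{2}(permKV s p) (fibre_stabE s_stab sVp_ge).
Qed.

End FibreStabiliser.

Lemma rowstab_colstab_eq1 n l (s : 'S_n) :
  sumn l <= n -> s \in rowstab n l -> s \in colstab n l -> s = 1%g.
Proof.
move=> l_le_n s_row s_col; apply/permP => p; rewrite perm1.
have [p_lt|p_ge] := ltnP p (n - sumn l).
  exact: perm_on_lt (fibre_stab_perm_on s_row) p_lt.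
have sp_ge : n - sumn l <= s p by rewrite (perm_on_ge _ (fibre_stab_perm_on s_row)).
have size_tab : n - sumn l + sumn l = n by rewrite subnK.
apply/val_inj/(@rowid_colid_inj l (n - sumn l)).
- by rewrite sp_ge size_tab ltn_ord.
- by rewrite p_ge size_tab ltn_ord.
- exact: fibre_stabE s_row p_ge.
- exact: fibre_stabE s_col p_ge.
Qed.

Local Open Scope ring_scope.

Section BrauerProduct.
Variables (K : fieldType) (n : nat).
Implicit Types (d : diagram n) (G : diagram n -> K).

Lemma bmulE (m : K) (a b : Br K n) d : bmul m a b d =
  \sum_d1 a d1 * \sum_d2 b d2 * ((diag_mul d1 d2 == d)%:R * m ^+ nloops d1 d2).
Proof.
rewrite ffunE; apply: eq_bigr => d1 _; rewrite mulr_sumr; apply: eq_bigr => d2 _.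
by case: eqP; rewrite ?mul1r ?mul0r ?mulr0 ?mulrA.
Qed.

Lemma sum_delta_mul d0 G : \sum_d (d == d0)%:R * G d = G d0.
Proof. by rewrite (bigD1 d0) //= eqxx mul1r big1 ?addr0 // => d /negbTE->; rewrite mul0r. Qed.

Lemma sum_lincomb_mul (I : finType) (A : pred I) (c : I -> K) (f : I -> diagram n) G :
  \sum_d (\sum_(x in A) c x * (d == f x)%:R) * G d = \sum_(x in A) c x * G (f x).
Proof.
under eq_bigr do rewrite mulr_suml.
rewrite exchange_big; apply: eq_bigr => x _.
by under eq_bigr do rewrite -mulrA; rewrite -mulr_sumr sum_delta_mul.
Qed.

Lemma sum_lincomb2_mul (I J : finType) (A : pred I) (B : pred J) (c : I -> J -> K)
    (f : I -> J -> diagram n) G :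
  \sum_d (\sum_(x in A) \sum_(y in B) c x y * (d == f x y)%:R) * G d =
  \sum_(x in A) \sum_(y in B) c x y * G (f x y).
Proof.
under eq_bigr do rewrite mulr_suml.
by rewrite exchange_big; apply: eq_bigr => x _; rewrite sum_lincomb_mul.
Qed.

Lemma sum_Tsum_mul G : \sum_d Tsum K n d * G d =
  \sum_(i : 'I_n) \sum_(j : 'I_n | (i < j)%N) (G (s_diag i j) - G (p_diag i j)).
Proof.
under eq_bigr do rewrite sum_ffunE mulr_suml.
rewrite exchange_big; apply: eq_bigr => i _.
under eq_bigr do rewrite sum_ffunE mulr_suml.
rewrite exchange_big; apply: eq_bigr => j _.
under eq_bigr do rewrite /t_elt !ffunE mulrBl.
by rewrite sumrB !sum_delta_mul.
Qed.

Lemma bmul_id_diagl (m : K) (b : Br K n) : bmul m (bd K (id_diag n)) b = b.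
Proof.
apply/ffunP => d; rewrite bmulE.
under eq_bigr do rewrite ffunE.
rewrite sum_delta_mul.
under eq_bigr do rewrite id_diag_mul nloops_id_diag expr0 mulr1 mulrC.
exact: sum_delta_mul.
Qed.

End BrauerProduct.

Definition narcs n k : nat := \sum_(i : 'I_n) \sum_(j : 'I_n | (i < j)%N) is_arc k i j.

Lemma narcs_gt0 n k : ~~ odd k -> (0 < k)%N -> (k <= n)%N -> (0 < narcs n k)%N.
Proof.
move=> k_even k_gt0 k_le_n.
have k_gt1 : (1 < k)%N by case: k k_even k_gt0 {k_le_n} => [|[]].
pose i0 := Ordinal (leq_trans k_gt0 k_le_n); pose j0 := Ordinal (leq_trans k_gt1 k_le_n).
rewrite /narcs (bigD1 i0) //= (bigD1 j0) //= addnAC -addnA ltn_addr //.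
by rewrite /is_arc k_gt0 -(inj_eq val_inj) /= (partnerE k_even).
Qed.

Lemma nprop_arc_diag n k : ~~ odd k -> (k <= n)%N -> (n - k <= nprop (arc_diag n k))%N.
Proof.
move=> k_even k_le_n.
have shift_lt (x : 'I_(n - k)) : (k + x < n)%N by rewrite -ltn_subRL ltn_ord.
pose shift x := Ordinal (shift_lt x).
have shift_inj : injective shift by move=> x y /(congr1 val) /addnI /val_inj.
rewrite -[X in (X <= _)%N]card_ord -cardsT -(card_imset _ shift_inj).
apply/subset_leq_card/subsetP => _ /imsetP[x _ ->].
by rewrite inE (arc_diagE k_even k_le_n) /= ltnNge leq_addr.
Qed.

Definition s_part_coef n lam : int :=
  \sum_(i : 'I_n) \sum_(j : 'I_n | (i < j)%N)
    \sum_(r in rowstab n lam) \sum_(c in colstab n lam)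
      (-1) ^+ odd_perm c *
      (diag_mul (s_diag i j) (arc_perm (n - sumn lam) (r * c)%g)
         == arc_diag n (n - sumn lam))%:Z.

Section ArcCoefficient.
Variables (K : fieldType) (n : nat) (lam : seq nat) (m : K).
Hypotheses (lam_lt_n : (sumn lam < n)%N) (k_even : ~~ odd (n - sumn lam)%N).
Local Notation k := (n - sumn lam)%N.
Local Notation R := (rowstab n lam).
Local Notation C := (colstab n lam).
Local Notation sg c := ((-1) ^+ odd_perm c).

Let k_le_n : (k <= n)%N. Proof. exact: leq_subr. Qed.
Let k_gt0 : (0 < k)%N. Proof. by rewrite subn_gt0. Qed.

Lemma ysymE d : ysym n m lam d =
  \sum_(r in R) \sum_(c in C) sg c * (d == perm_diag (r * c)%g)%:R :> K.
Proof.
rewrite /ysym bmulE.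
under eq_bigr do rewrite sum_ffunE.
under eq_bigr do under eq_bigr do rewrite ffunE -[(_ == _)%:R]mul1r.
rewrite sum_lincomb_mul; apply: eq_bigr => r _; rewrite mul1r.
under eq_bigr do rewrite sum_ffunE.
under eq_bigr do under eq_bigr do rewrite !ffunE.
rewrite sum_lincomb_mul; apply: eq_bigr => c _.
by rewrite perm_diag_mul nloops_perm_diag expr0 mulr1 eq_sym.
Qed.

Lemma cellgenE d : cellgen n m lam d =
  \sum_(r in R) \sum_(c in C) sg c * (d == arc_perm k (r * c)%g)%:R :> K.
Proof.
rewrite /cellgen bmulE.
under eq_bigr do rewrite ffunE.
rewrite sum_delta_mul.
under eq_bigr do rewrite ysymE.
rewrite sum_lincomb2_mul; apply: eq_bigr => r _; apply: eq_bigr => s _.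
by rewrite nloops_arc_perm expr0 mulr1 eq_sym.
Qed.

Lemma perm_on_rowstab_colstab r c :
  r \in R -> c \in C -> perm_on (ords_ge n k) (r * c)%g.
Proof.
move=> r_row c_col.
by apply: perm_onM; [exact: fibre_stab_perm_on r_row | exact: fibre_stab_perm_on c_col].
Qed.

Lemma mul_rowstab_colstab_eq1 r c : r \in R -> c \in C ->
  ((r * c)%g == 1%g) = (r == 1%g) && (c == 1%g).
Proof.
move=> r_row c_col; apply/idP/idP => [/eqP rc1|/andP[/eqP-> /eqP->]]; last by rewrite mulg1.
have c_row : c \in R by rewrite -[c](mulKg r) rc1 mulg1 fibre_stabV.
have c1 := rowstab_colstab_eq1 (ltnW lam_lt_n) c_row c_col.
by move: rc1; rewrite c1 mulg1 => ->; rewrite !eqxx.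
Qed.

Lemma sum_rowstab_colstab_eq1 (b : bool) :
  \sum_(r in R) \sum_(c in C) sg c * (b && ((r * c)%g == 1%g))%:R = b%:R :> K.
Proof.
rewrite (bigD1 1%g) ?fibre_stab1 //= [X in _ + X]big1 ?addr0; last first.
  move=> r /andP[r_row r1]; apply: big1 => s s_col.
  by rewrite mul_rowstab_colstab_eq1 // (negbTE r1) andbF mulr0.
rewrite (bigD1 1%g) ?fibre_stab1 //= [X in _ + X]big1 ?addr0; last first.
  move=> s /andP[s_col s1].
  by rewrite mul_rowstab_colstab_eq1 ?fibre_stab1 // (negbTE s1) !andbF mulr0.
by rewrite mulg1 eqxx andbT odd_perm1 mul1r.
Qed.

Lemma arc_coef_Tsum_cellgen :
  bmul m (Tsum K n) (cellgen n m lam) (arc_diag n k) =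
  (s_part_coef n lam)%:~R - (narcs n k)%:R * m.
Proof.
rewrite bmulE.
under eq_bigr do under eq_bigr do rewrite cellgenE.
under eq_bigr do rewrite sum_lincomb2_mul.
rewrite sum_Tsum_mul /s_part_coef /narcs rmorph_sum natr_sum mulr_suml -sumrB.
apply: eq_bigr => i _; rewrite rmorph_sum natr_sum mulr_suml -sumrB.
apply: eq_bigr => j i_lt_j; rewrite -(sum_rowstab_colstab_eq1 (is_arc k i j)) mulr_suml.
congr (_ - _).
  rewrite rmorph_sum; apply: eq_bigr => r _; rewrite rmorph_sum; apply: eq_bigr => s _.
  by rewrite nloops_s_diag expr0 mulr1 rmorphM /= rmorph_sign.
apply: eq_bigr => r r_row; rewrite mulr_suml; apply: eq_bigr => s s_col.
rewrite p_diag_arc_perm_coef ?perm_on_rowstab_colstab //.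
by rewrite -mulrA [_ * m]mulrC mulrA.
Qed.

End ArcCoefficient.

Lemma ratr_int_div (K : fieldType) (a : int) (b : nat) : [pchar K] =i pred0 ->
  (0 < b)%N -> ratr (a%:~R / b%:R : rat) = a%:~R / b%:R :> K.
Proof.
move=> /pcharf0P charK0 b_gt0; set q : rat := a%:~R / b%:R.
have bK : (b%:R : K) != 0 by rewrite charK0 -lt0n.
have qb : q * b%:R = a%:~R by rewrite mulfVK // Num.Theory.pnatr_eq0 -lt0n.
have num_den : (numq q * b%:Z = a * denq q)%R.
  by apply: (@intr_inj rat); rewrite !rmorphM /= -qb mulrAC numqE -natz rmorph_nat.
rewrite /ratr; move: num_den (denq_gt0 q); case: (denq q) => // d num_den d_gt0.
have dK : (d%:R : K) != 0 by rewrite charK0 -lt0n.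
move/(congr1 (fun z : int => (z%:~R : K))): num_den; rewrite !rmorphM /= -!natz !rmorph_nat.
move=> numK; apply: (mulIf dK); rewrite divfK //.
by apply: (mulIf bK); rewrite mulrAC divfK // numK.
Qed.

Unset Implicit Arguments.

Theorem mainTheorem8 (K : fieldType) (charK0 : [pchar K] =i pred0)
  (n : nat) (lam : seq nat) :
  (2 <= n)%N -> is_partition lam -> (sumn lam < n)%N -> ~~ odd (n - sumn lam) ->
  exists F : seq rat,
    forall m : K,
      (forall z : int, in_Sn n z -> m != z%:~R) ->
      (forall q : rat, q \in F -> m != ratr q) ->
      rho_nonzero m lam (Tsum K n).
Proof.
move=> _ _ lam_lt_n k_even; set k := (n - sumn lam)%N.
have narcs_pos : (0 < narcs n k)%N by rewrite narcs_gt0 ?subn_gt0 ?leq_subr.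
exists [:: (s_part_coef n lam)%:~R / (narcs n k)%:R] => m _ m_notin_F.
exists (bd K (id_diag n)) => in_J.
have := nprop_arc_diag k_even (leq_subr _ _); rewrite (subKn (ltnW lam_lt_n)) => /in_J.
rewrite bmul_id_diagl (arc_coef_Tsum_cellgen _ lam_lt_n k_even) => /eqP.
rewrite subr_eq0 => /eqP coef0.
have narcsK : (narcs n k)%:R != 0 :> K by move/pcharf0P: charK0 => ->; rewrite -lt0n.
move: (m_notin_F _ (mem_head _ _)); rewrite ratr_int_div // coef0 mulrC mulKf //.
by rewrite eqxx.
Qed.
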